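(* Let $X$ be a real Banach space. Then the set $\mathcal{F}(X)$ of Flinn elements of $X$ is norm-closed in $X$.
   Context: A bounded linear operator $T:X\to X$ on a real Banach space is numerically positive if for every $x\in X$ and every $x^*\in X^*$ with $\|x^*\|^2=\|x\|^2=x^*(x)$ one has $x^*(Tx)\ge 0$. An element $u\in X$ is a Flinn element if there is a numerically positive linear projection of $X$ onto $\operatorname{span}\{u\}$; for $u\neq 0$ this means there exists $f\in X^*$ with $f(u)=1$ such that the map $f\otimes u: x\mapsto f(x)u$ is numerically positive. The element $0$ is a Flinn element. $\mathcal{F}(X)$ denotes the set of all Flinn elements of $X$. *)

From HB Require Import structures.
From mathcomp Require Import all_boot all_order all_algebra.
From mathcomp Require Import all_classical all_reals all_analysis.
Set Implicit Arguments. Unset Strict Implicit. Unset Printing Implicit Defensive.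
Import Order.TTheory GRing.Theory Num.Theory.
Import numFieldNormedType.Exports.
Local Open Scope classical_set_scope.
Local Open Scope ring_scope.

Section Flinn.
Context {R : realType} {X : completeNormedModType R}.

Definition is_linear {Y : lmodType R} (f : X -> Y) : Prop :=
  forall (a : R) (x y : X), f (a *: x + y) = a *: f x + f y.

Definition in_dual (f : X -> R) : Prop := is_linear f /\ continuous f.

Definition dual_norm (f : X -> R) : R :=
  sup [set `|f x| | x in [set x : X | `|x| <= 1]].

(* numerically positive operator (T assumed bounded linear where used) *)
Definition numerically_positive (T : X -> X) : Prop :=
  forall (x : X) (xs : X -> R), in_dual xs ->
    dual_norm xs ^+ 2 = `|x| ^+ 2 -> xs x = `|x| ^+ 2 -> 0 <= xs (T x).

Definition flinn (u : X) : Prop :=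
  exists P : X -> X,
    [/\ is_linear P, continuous P, (forall x, P (P x) = P x),
        range P = [set c *: u | c in [set: R]] & numerically_positive P].

Definition flinn_set : set X := [set u | flinn u].

End Flinn.

From HB Require Import structures.
From mathcomp Require Import all_boot all_order all_algebra.
From mathcomp Require Import all_classical all_reals all_analysis.
From mathcomp Require Import lra.
Set Implicit Arguments. Unset Strict Implicit. Unset Printing Implicit Defensive.
Import Order.TTheory GRing.Theory Num.Theory.
Import numFieldNormedType.Exports.
Local Open Scope classical_set_scope.
Local Open Scope ring_scope.

(* A nonzero u is a Flinn element iff some f in X^* with f u = 1 makes the rank-one
   projection x |-> f x *: u numerically positive (flinnP). Testing numerical
   positivity against a duality functional shows that such a projection has norm at
   most 4, so the functionals attached to Flinn elements v close to u are uniformly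
   bounded. Their pointwise limit along an ultrafilter converging to u (a weak* cluster
   point) still takes the value 1 at u and, numerical positivity being a closed
   condition, again yields a numerically positive projection onto span u. Duality
   functionals are supplied by the Hahn-Banach theorem, proved by Zorn's lemma on
   graphs of norm-dominated partial linear functionals. *)

Section HahnBanach.
Context {R : realType} {X : normedModType R}.

(* Partial linear functionals on X are represented by their graphs in X * R. *)
Definition linear_graph (G : set (X * R)) :=
  forall (a : R) p q, G p -> G q -> G (a *: p.1 + q.1, a * p.2 + q.2).

Definition dominated_graph (G : set (X * R)) :=
  linear_graph G /\ forall p, G p -> p.2 <= `|p.1|.

Lemma linear_graphD G p q : linear_graph G -> G p -> G q -> G (p.1 + q.1, p.2 + q.2).
Proof. by move=> lG Gp Gq; have := lG 1 _ _ Gp Gq; rewrite scale1r mul1r. Qed.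

Lemma linear_graphZ G a p : linear_graph G -> G (0, 0) -> G p -> G (a *: p.1, a * p.2).
Proof. by move=> lG G00 Gp; have := lG a _ _ Gp G00; rewrite /= !addr0. Qed.

Lemma dominated_graph_fun G x r s : dominated_graph G -> G (x, r) -> G (x, s) -> r = s.
Proof.
move=> [lG dG] Gr Gs.
have := dG _ (lG (-1) _ _ Gr Gs); have := dG _ (lG (-1) _ _ Gs Gr).
rewrite /= scaleN1r addNr normr0; lra.
Qed.

Lemma dominated_graph_ext_value G z : dominated_graph G -> G (0, 0) ->
  exists a, forall p t, G p -> p.2 + t * a <= `|p.1 + t *: z|.
Proof.
move=> [lG dG] G00.
(* The admissible values a lie between sup (r - |x - z|) and inf (|x' + z| - r') over
   (x, r), (x', r') in G; domination of G makes this interval nonempty. *)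
have sep p q : G p -> G q -> q.2 - `|q.1 - z| <= `|p.1 + z| - p.2.
  move=> Gp Gq; have := dG _ (linear_graphD lG Gq Gp) => /=.
  have : `|q.1 + p.1| <= `|q.1 - z| + `|p.1 + z|.
    by rewrite -[in X in X <= _](addrNK z q.1) addrAC -addrA ler_normD.
  lra.
pose S := [set p.2 - `|p.1 - z| | p in G].
have supS : has_sup S.
  split; first by exists (0 - `|0 - z|), (0, 0).
  by exists (`|0 + z| - 0) => _ [q Gq <-]; exact: (sep (0, 0)).
exists (sup S) => -[x r] t Gxr /=.
have [t0|t0|->] := ltgtP t 0; last by rewrite mul0r scale0r !addr0; exact: dG _ Gxr.
- have nt0 : 0 < - t by rewrite oppr_gt0.
  have : (- t)^-1 * r - `|(- t)^-1 *: x - z| <= sup S.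
    apply: sup_upper_bound => //.
    by exists ((- t)^-1 *: x, (- t)^-1 * r); first exact: (linear_graphZ _ lG G00 Gxr).
  have -> : x + t *: z = - t *: ((- t)^-1 *: x - z).
    by rewrite scalerBr scalerA mulfV ?gt_eqF // scale1r scaleNr opprK.
  rewrite normrZ gtr0_norm //.
  move/(ler_wpM2l (ltW nt0)); rewrite mulrBr mulrA mulfV ?gt_eqF // mul1r; lra.
- have : sup S <= `|t^-1 *: x + z| - t^-1 * r.
    apply: ge_sup; first by case: supS.
    by move=> _ [q Gq <-]; exact: (sep _ _ (linear_graphZ _ lG G00 Gxr) Gq).
  have -> : x + t *: z = t *: (t^-1 *: x + z).
    by rewrite scalerDr scalerA mulfV ?gt_eqF // scale1r.
  rewrite normrZ gtr0_norm //.
  move/(ler_wpM2l (ltW t0)); rewrite mulrBr mulrA mulfV ?gt_eqF // mul1r; lra.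
Qed.

Lemma dominated_graph_ext G z : dominated_graph G -> G (0, 0) ->
  ~ (exists r, G (z, r)) -> exists2 G', dominated_graph G' & G `<` G'.
Proof.
move=> dG G00 Gz; have [a ha] := dominated_graph_ext_value z dG G00.
exists [set (p.1 + t *: z, p.2 + t * a) | t in setT & p in G].
- split => [b _ _ [t _ [p Gp <-]] [t' _ [p' Gp' <-]]|_ [t _ [p Gp <-]]]; last exact: ha.
  exists (b * t + t') => //; exists (b *: p.1 + p'.1, b * p.2 + p'.2); first exact: dG.1.
  rewrite /= scalerDl scalerDr scalerA mulrDl mulrDr mulrA.
  by congr (_, _); rewrite addrACA.
- split=> [[x r] Gp|sub].
    by exists 0 => //; exists (x, r); rewrite // scale0r mul0r !addr0.
  apply: Gz; exists a; apply: sub; exists 1 => //; exists (0, 0) => //.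
  by rewrite /= scale1r mul1r !add0r.
Qed.

Section Extension.
Variable G0 : set (X * R).
Hypotheses (dG0 : dominated_graph G0) (G00 : G0 (0, 0)).

(* Zorn's lemma is applied to the sets [A] with [A `|` G0] dominated, so that the
   union of the empty chain is admissible. *)
Let extends (A : set (X * R)) := dominated_graph (A `|` G0).

Lemma extends_bigcup_chain (F : set (set (X * R))) : F `<=` extends ->
  total_on F subset -> extends (\bigcup_(B in F) B).
Proof.
move=> Fext Ftot; set U := \bigcup_(B in F) B.
pose F0 B := F B \/ B = set0.
have F0ext B : F0 B -> extends B by case=> [/Fext //|->]; rewrite /extends set0U.
have F0sub B : F0 B -> B `|` G0 `<=` U `|` G0.
  by case=> [FB|->]; [apply: setSU => p Bp; exists B | rewrite set0U; exact: subsetUr].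
have F0tot B B' : F0 B -> F0 B' -> B `<=` B' \/ B' `<=` B.
  case=> [FB|->]; last by left; exact: sub0set.
  by case=> [FB'|->]; [exact: Ftot | right; exact: sub0set].
have F0mem p : (U `|` G0) p -> exists2 B, F0 B & (B `|` G0) p.
  case=> [[B FB Bp]|G0p]; first by exists B; [left | left].
  by exists set0; [right | right].
split=> [a p q /F0mem [B FB Bp] /F0mem [B' FB' B'q]|p /F0mem [B FB Bp]].
  have [sBB'|sB'B] := F0tot _ _ FB FB'.
    apply: (F0sub _ FB'); apply: (F0ext _ FB').1 => //; exact: setSU Bp.
  apply: (F0sub _ FB); apply: (F0ext _ FB).1 => //; exact: setSU B'q.
exact: (F0ext _ FB).2.
Qed.

Lemma dominated_graph_total :
  exists2 G, dominated_graph G & G0 `<=` G /\ forall x, exists r, G (x, r).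
Proof.
have [A [Aext Amax]] := Zorn_bigcup extends_bigcup_chain.
exists (A `|` G0) => //; split=> [|x]; first exact: subsetUr.
apply: contrapT => nx.
have [G' dG' [sAG' nG'A]] := dominated_graph_ext Aext (or_intror G00) nx.
apply: (Amax G').
  split=> [p Ap|sG'A]; first by apply: sAG'; left.
  by apply: nG'A => p /sG'A; left.
rewrite /extends; suff -> : G' `|` G0 = G' by [].
by apply/setUidPl => p G0p; apply: sAG'; right.
Qed.

Lemma hahn_banach : exists phi : X -> R,
  [/\ scalar phi, forall x, `|phi x| <= `|x| & forall p, G0 p -> phi p.1 = p.2].
Proof.
have [G [lG dG] [sG0G Gtot]] := dominated_graph_total.
have [phi Gphi] := choice Gtot.
exists phi; split.
- move=> a u v; apply: (dominated_graph_fun (conj lG dG) (Gphi _)).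
  exact: lG (Gphi u) (Gphi v).
- move=> x; have := dG _ (Gphi x).
  have := dG _ (linear_graphZ (-1) lG (sG0G _ G00) (Gphi x)).
  by rewrite /= scaleN1r normrN ler_norml; lra.
- by move=> [x r] G0xr; apply: (dominated_graph_fun (conj lG dG) (Gphi x)); apply: sG0G.
Qed.

End Extension.

Lemma norming_functional (y : X) : exists phi : X -> R,
  [/\ scalar phi, forall x, `|phi x| <= `|x| & phi y = `|y|].
Proof.
pose G0 := [set (t *: y, t * `|y|) | t in [set: R]].
have dG0 : dominated_graph G0.
  split=> [a _ _ [t _ <-] [s _ <-]|_ [t _ <-]] /=.
    by exists (a * t + s) => //; rewrite scalerDl scalerA mulrDl mulrA.
  by rewrite normrZ ler_wpM2r // ler_norm.
have G00 : G0 (0, 0) by exists 0; rewrite // scale0r mul0r.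
have [phi [phil phib phiG0]] := hahn_banach dG0 G00.
exists phi; split=> //.
have := phiG0 (1 *: y, 1 * `|y|); rewrite /= scale1r mul1r; apply.
by exists 1; rewrite // scale1r mul1r.
Qed.

End HahnBanach.

Section Flinn.
Context {R : realType} {X : completeNormedModType R}.

Lemma functionalZ (f : X -> R) : is_linear f -> forall a x, f (a *: x) = a * f x.
Proof. exact: scalable_linear. Qed.

Lemma functionalD (f : X -> R) : is_linear f -> forall x y, f (x + y) = f x + f y.
Proof. by move=> fl x y; have := fl 1 x y; rewrite !scale1r. Qed.

Lemma functional0 (f : X -> R) : is_linear f -> f 0 = 0.
Proof. by move=> fl; rewrite -(scale0r 0) (functionalZ fl) mul0r. Qed.

Lemma is_linear_bounded_continuous (Y : normedModType R) (f : X -> Y) (k : R) :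
  is_linear f -> (forall x, `|f x| <= k * `|x|) -> continuous f.
Proof.
move=> fl fb.
pose F : {linear X -> Y} := HB.pack f (GRing.isLinear.Build R X Y *:%R f fl).
apply: (@bounded_linear_continuous R X Y F); apply/linear_boundedP.
near=> r => x; apply: le_trans (fb x) _; apply: ler_wpM2r => //.
Unshelve. all: by end_near. Qed.

Lemma dual_norm_le (f : X -> R) (k : R) : 0 <= k ->
  (forall x, `|f x| <= k * `|x|) -> dual_norm f <= k.
Proof.
move=> k0 fb; apply: ge_sup; first by exists `|f 0|, 0 => //=; rewrite normr0.
by move=> _ [x /= x1 <-]; apply: le_trans (fb x) _; exact: ler_piMr.
Qed.

Lemma le_dual_norm (f : X -> R) (k : R) x : (forall x, `|f x| <= k * `|x|) ->
  `|x| <= 1 -> `|f x| <= dual_norm f.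
Proof.
move=> fb x1; apply: sup_upper_bound; last by exists x.
split; first by exists `|f x|, x.
exists `|k| => _ [y /= y1 <-]; apply: le_trans (fb y) _.
by apply: le_trans (ler_norm _) _; rewrite normrM normr_id; exact: ler_piMr.
Qed.

Lemma duality_functional (w : X) : exists xs : X -> R,
  [/\ in_dual xs, dual_norm xs = `|w|, xs w = `|w| ^+ 2 & forall v, `|xs v| <= `|w| * `|v|].
Proof.
have [phi [phil phib phiw]] := norming_functional w.
pose xs v := `|w| * phi v.
have xsl : is_linear xs by move=> a u v; rewrite /xs phil mulrDr mulrCA.
have xsb v : `|xs v| <= `|w| * `|v| by rewrite /xs normrM normr_id ler_wpM2l.
exists xs; split=> //; last by rewrite /xs phiw expr2.
  by split=> //; exact: is_linear_bounded_continuous xsb.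
apply/eqP; rewrite eq_le dual_norm_le //=.
have [->|w0] := eqVneq w 0.
  rewrite normr0; apply: le_trans (normr_ge0 (xs 0)) (le_dual_norm (x := 0) xsb _).
  by rewrite normr0.
have xs_unit : `|xs (`|w|^-1 *: w)| = `|w|.
  by rewrite /xs (functionalZ phil) phiw mulrA mulfV ?normr_eq0 // mul1r normr_id.
rewrite -[leLHS]xs_unit; apply: le_dual_norm xsb _.
by rewrite normrZ normfV normr_id mulVf ?normr_eq0.
Qed.

Lemma numerically_positive_idem_norm_le (P : X -> X) : is_linear P ->
  (forall x, P (P x) = P x) -> numerically_positive P -> forall x, `|P x| <= 4 * `|x|.
Proof.
move=> Pl Pidem Ppos x.
(* Numerical positivity at z gives J z (x) >= |z|^2 for a duality functional J z,
   hence |z| <= |x|, while P x = 2 (x - z). *)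
pose z := x - 2^-1 *: P x.
have Pz : P z = 2^-1 *: P x.
  rewrite /z (zmod_morphism_linear Pl) (scalable_linear Pl) Pidem.
  by rewrite -{1}[P x]scale1r -scalerBl; congr (_ *: _); lra.
have [xs [xsd xsn xsz xsb]] := duality_functional z.
have xsPx : 0 <= xs (P x).
  have := Ppos z xs xsd (congr1 (fun r => r ^+ 2) xsn) xsz.
  by rewrite Pz (functionalZ xsd.1) pmulr_rge0.
have xsx : xs x = `|z| ^+ 2 + 2^-1 * xs (P x).
  by rewrite -xsz -(functionalZ xsd.1) -(functionalD xsd.1) /z subrK.
have zx : `|z| <= `|x|.
  have := le_trans (ler_norm _) (xsb x); rewrite xsx expr2.
  have := normr_ge0 z; have := normr_ge0 x; nra.
have -> : P x = 2 *: (x - z) by rewrite /z opprB addrC subrK scalerA mulfV ?scale1r.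
rewrite normrZ ger0_norm //; have := ler_normB x z; lra.
Qed.

Definition rank_one (f : X -> R) (u : X) (x : X) : X := f x *: u.

Lemma rank_one_linear f u : is_linear f -> is_linear (rank_one f u).
Proof. by move=> fl a x y; rewrite /rank_one fl scalerDl scalerA. Qed.

Lemma rank_one_idem f u : is_linear f -> f u = 1 ->
  forall x, rank_one f u (rank_one f u x) = rank_one f u x.
Proof. by move=> fl fu x; rewrite /rank_one (functionalZ fl) fu mulr1. Qed.

Lemma rank_one_norm_le f u : is_linear f -> f u = 1 ->
  numerically_positive (rank_one f u) -> forall x, `|f x| * `|u| <= 4 * `|x|.
Proof.
move=> fl fu fpos x; rewrite -normrZ.
exact: numerically_positive_idem_norm_le (rank_one_linear u fl) (rank_one_idem fl fu) fpos x.
Qed.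

Lemma scalerIr (v : X) : v != 0 -> injective ( *:%R^~ v : R -> X).
Proof.
move=> v0 a b /eqP; rewrite -subr_eq0 -scalerBl scaler_eq0 (negbTE v0) orbF subr_eq0.
by move/eqP.
Qed.

Lemma flinn0 : flinn (0 : X).
Proof.
exists (fun=> 0); split=> //.
- by move=> a x y; rewrite scaler0 addr0.
- exact: cst_continuous.
- by apply/seteqP; split=> _ [x _ <-]; exists 0; rewrite ?scaler0.
- by move=> x xs [xsl _] _ _; rewrite (functional0 xsl).
Qed.

Lemma flinnP (u : X) : u != 0 -> flinn u <->
  exists2 f : X -> R, in_dual f /\ f u = 1 & numerically_positive (rank_one f u).
Proof.
move=> u0; split=> [[P [Pl _ Pidem Prange Ppos]]|[f [[fl fc] fu] fpos]]; last first.
  exists (rank_one f u); split => //.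
  - exact: rank_one_linear.
  - by move=> x; apply: continuousZ; [exact: fc | exact: cvg_cst].
  - exact: rank_one_idem fl fu.
  apply/seteqP; split=> _ [x _ <-]; first by exists (f x).
  by exists (x *: u) => //; rewrite /rank_one (functionalZ fl) fu mulr1.
have /choice [c Pc] : forall x, exists a : R, P x = a *: u.
  move=> x; have : range P (P x) by exists x.
  by rewrite Prange => -[a _ <-]; exists a.
have cl : is_linear c.
  by move=> a x y; apply: (scalerIr u0); rewrite /= -Pc Pl !Pc scalerDl scalerA.
have cu : c u = 1.
  have : range P u by rewrite Prange; exists 1; rewrite ?scale1r.
  by move=> [w _ Pw]; apply: (scalerIr u0); rewrite /= -Pc -Pw Pidem scale1r.
have cP : rank_one c u = P by apply/funext => x; rewrite Pc.
have cpos : numerically_positive (rank_one c u) by rewrite cP.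
exists c => //; split => //; split => //.
apply: (is_linear_bounded_continuous (k := 4 / `|u|) cl) => x.
by rewrite mulrAC ler_pdivlMr ?normr_gt0 //; exact: rank_one_norm_le.
Qed.

Lemma ultra_bounded_cvg (T : Type) (U : set_system T) (g : T -> R) (b : R) :
  UltraFilter U -> (\forall t \near U, `|g t| <= b) -> exists2 l, `|l| <= b & g @ U --> l.
Proof.
move=> UU Ub.
have gUb : (g @ U) [set` `[- b, b]].
  by apply: filterS Ub => t; rewrite /= in_itv /= -ler_norml.
have [l [lb lcl]] := @segment_compact R (- b) b _ _ gUb.
exists l; first by move: lb; rewrite /= in_itv /= -ler_norml.
move=> N Nl; have [//|gNC] := in_ultra_setVsetC (g @^-1` N) UU.
by have [w [nNw Nw]] := lcl _ _ (gNC : (g @ U) (~` N)) Nl.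
Qed.

Lemma ultra_pointwise_limit (T : Type) (U : set_system T) (f : T -> X -> R) (M : R) :
  UltraFilter U -> (\forall t \near U, is_linear (f t) /\ forall x, `|f t x| <= M * `|x|) ->
  exists2 C : X -> R, in_dual C & forall x, f^~ x @ U --> C x.
Proof.
move=> UU Uf; have PU : ProperFilter U by exact: ultra_proper.
have /choice [C hC] : forall x, exists l, `|l| <= M * `|x| /\ f^~ x @ U --> l.
  move=> x; have fxb : \forall t \near U, `|f t x| <= M * `|x|.
    by apply: filterS Uf => t [_]; apply.
  by have [l lb fl] := ultra_bounded_cvg UU fxb; exists l.
have Cl : is_linear C.
  move=> a x y; apply: (norm_cvg_unique (hC (a *: x + y)).2).
  apply: cvg_trans (cvgD (cvgM (cvg_cst a) (hC x).2) (hC y).2).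
  by apply: near_eq_cvg; apply: filterS Uf => t [ftl _]; rewrite /= ftl.
exists C; last by move=> x; exact: (hC x).2.
have Cb x : `|C x| <= M * `|x| by exact: (hC x).1.
by split=> //; exact: is_linear_bounded_continuous Cb.
Qed.

Lemma flinn_ultra_limit (U : set_system X) (u : X) : UltraFilter U ->
  U flinn_set -> id @ U --> u -> u != 0 -> flinn u.
Proof.
move=> UU Uflinn Uu u0; have PU : ProperFilter U by exact: ultra_proper.
have /choice [f hf] : forall v, exists f : X -> R, flinn v -> v != 0 ->
    [/\ in_dual f, f v = 1 & numerically_positive (rank_one f v)].
  move=> v; have [[fv v0]|nfv] := pselect (flinn v /\ v != 0); last first.
    by exists 0 => fv v0; case: nfv.
  by have [g [gd gv] gpos] := (flinnP v0).1 fv; exists g.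
pose M := 4 / (`|u| / 2).
have Uf : \forall v \near U, [/\ in_dual (f v), forall x, `|f v x| <= M * `|x|,
    f v v = 1 & numerically_positive (rank_one (f v) v)].
  have Ularge : \forall v \near U, `|u| / 2 < `|v|.
    by apply: cvgr_norm_gt Uu _ _; rewrite ltr_pdivrMr // ltr_pMr ?normr_gt0 // ltr1n.
  apply: filterS2 Uflinn Ularge => v fv uv.
  have v0 : v != 0 by rewrite -normr_gt0; apply: lt_trans uv; rewrite divr_gt0 ?normr_gt0.
  have [fd fvv fpos] := hf v fv v0; split=> // x.
  rewrite /M mulrAC ler_pdivlMr ?divr_gt0 ?normr_gt0 //.
  apply: le_trans (rank_one_norm_le fd.1 fvv fpos x).
  by apply: ler_wpM2l => //; exact: ltW.
have [C Cd fC] : exists2 C : X -> R, in_dual C & forall x, (fun v => f v x) @ U --> C x.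
  by apply: ultra_pointwise_limit UU _; apply: filterS Uf => v [[]].
apply/(flinnP u0); exists C; first split=> //.
  apply: (norm_cvg_unique (fC u)); apply/cvgrPdist_lt => e e0.
  have Me0 : 0 < e / M by rewrite !divr_gt0 ?normr_gt0.
  near=> v; have [|[fl _] fb fv _] := near Uf v; first by [].
  rewrite -[u in f v u](subrK v) (functionalD fl) fv opprD addrCA subrr addr0 normrN.
  apply: le_lt_trans (fb _) _; rewrite -ltr_pdivlMl ?divr_gt0 ?normr_gt0 // mulrC.
  near: v; exact: cvgr_dist_lt.
move=> x xs xsd xsn xsx; rewrite /rank_one (functionalZ xsd.1).
have xsU : xs @ U --> xs u by apply: cvg_trans (xsd.2 u); exact: cvg_app Uu.
apply: (closed_cvg _ (@closed_ge _ 0) _ _ (cvgM (fC x) xsU)).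
near=> v; have [|_ _ _ fpos] := near Uf v; first by [].
by have := fpos x xs xsd xsn xsx; rewrite /rank_one (functionalZ xsd.1).
Unshelve. all: by end_near. Qed.

End Flinn.

Unset Implicit Arguments.
Set Strict Implicit.

Theorem proposition2p4 (R : realType) (X : completeNormedModType R) :
  closed (@flinn_set R X).
Proof.
move=> u clu; have [->|u0] := eqVneq u 0; first exact: flinn0.
have [U [UU sU]] := ultraFilterLemma (within_nbhs_proper clu).
apply: (flinn_ultra_limit UU _ _ u0); first by apply: sU; exact: withinT.
exact: cvg_trans sU (cvg_within _).
Qed.
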